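(* There exist absolute constants $C_1,C_2>0$ and $C_3>1$ with the following property. Let $(V_o,w_o,\mu_o)$ be any simple weighted graph with adapted weight $\sigma_o$, and let $(V,w,\mu)$ be its modified graph with any weight $\mathfrak n$. Define the bounded function $\mathcal U$ on $V$ by $\mathcal U(x)=-C_1$ for $x\in V\setminus V_o$ and $\mathcal U(x)=C_2$ for $x\in V_o$. Then there exists a function $\varphi$ on $V$ with $1\le\varphi\le C_3$ and \[(\Delta+\mathcal U)\varphi\ge0\quad\text{on }V,\] where $\Delta$ is the formal Laplacian of $(V,w,\mu)$.
   Context: **Weighted graphs.** A simple weighted graph $(V,w,\mu)$ consists of a countably infinite set $V$, a symmetric function $w:V\times V\to[0,\infty)$ and a function $\mu:V\to(0,\infty)$. The graph with edges $\{x\sim y:w(x,y)>0\}$ is assumed to be locally finite, connected, and without loops or multiple edges. **Adapted weights.** An adapted weight is a symmetric $\sigma:E\to(0,1]$ with $\frac1{\mu(x)}\sum_y w(x,y)\sigma(x,y)^2\le1$ for all $x$. **Formal Laplacian.** $\Delta u(x)=\frac1{\mu(x)}\sum_y w(x,y)(u(x)-u(y))$. **Modified graph.** Fix an orientation $E_o^+$ of $E_o$, and let $\mathfrak n:E_o\to\mathbb N_+$ be symmetric with $\mathfrak n\ge2$. For $e=(x,y)\in E_o^+$, add distinct new vertices $x^e_1,\dots,x^e_{\mathfrak n(e)-1}$, set $x_0^e=x$, $x^e_{\mathfrak n(e)}=y$, and replace the edge $x\sim y$ by the path $x^e_0\sim\cdots\sim x^e_{\mathfrak n(e)}$. Weights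 and measure: - $w(x^e_i,x^e_{i+1})=\mathfrak n(e)w_o(e)$, symmetric, and $w=0$ otherwise; - $\mu=\mu_o$ on $V_o$, and $\mu(x^e_i)=2w_o(e)\sigma_o(e)^2/\mathfrak n(e)$ for $1\le i\le\mathfrak n(e)-1$. *)

From HB Require Import structures.
From mathcomp Require Import all_boot all_order all_algebra.
From mathcomp Require Import all_classical all_reals.
From mathcomp Require Import Rstruct.
From Stdlib Require Import Rdefinitions.
Set Implicit Arguments. Unset Strict Implicit. Unset Printing Implicit Defensive.
Import Order.TTheory GRing.Theory Num.Theory.
Local Open Scope classical_set_scope.
Local Open Scope ring_scope.

Notation RR := Rdefinitions.R (only parsing).

(* Formal Laplacian: Delta u(x) = 1/mu(x) * sum_y w(x,y) (u(x) - u(y)).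
   The sum is over the (finite, by local finiteness) set of neighbours
   {y | w x y <> 0}; terms outside this set vanish anyway. *)
Definition laplacian (V : choiceType) (w : V -> V -> RR) (mu : V -> RR)
    (u : V -> RR) (x : V) : RR :=
  (mu x)^-1 * \sum_(y \in [set y | w x y != 0]) (w x y * (u x - u y)).

Definition adj (V : Type) (w : V -> V -> RR) : rel V := fun x y => w x y != 0.

Definition simple_wgraph (V : countType) (w : V -> V -> RR) (mu : V -> RR) : Prop :=
  [/\ infinite_set [set: V],
      ((forall x y, w x y = w y x) /\ (forall x, w x x = 0)),
      ((forall x y, 0 <= w x y) /\ (forall x, 0 < mu x)),
      (forall x, finite_set [set y | w x y != 0]) &
      (forall x y, exists s : seq V, path (adj w) x s /\ last x s = y)].

(* Adapted weight sigma : E -> (0,1] (given as a function on V x V, only its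
   values on edges matter). *)
Definition adapted (V : choiceType) (w : V -> V -> RR) (mu : V -> RR)
    (sigma : V -> V -> RR) : Prop :=
  [/\ (forall x y, 0 < w x y -> sigma x y = sigma y x),
      (forall x y, 0 < w x y -> 0 < sigma x y <= 1) &
      (forall x, (mu x)^-1 *
         \sum_(y \in [set y | w x y != 0]) (w x y * sigma x y ^+ 2) <= 1)].

Definition orientation (V : Type) (w : V -> V -> RR) (ori : rel V) : Prop :=
  forall x y, 0 < w x y -> ori x y = ~~ ori y x.

Definition edge_weight (V : Type) (w : V -> V -> RR) (n : V -> V -> nat) : Prop :=
  forall x y, 0 < w x y -> n x y = n y x /\ leq 2 (n x y).

Section Modified.
Variables (Vo : countType) (wo : Vo -> Vo -> RR) (muo : Vo -> RR)
  (sigma : Vo -> Vo -> RR) (ori : rel Vo) (n : Vo -> Vo -> nat).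

(* New vertex x^e_i for e = (x,y) in E_o^+ and 1 <= i <= n(e)-1,
   encoded as ((x, y), i). *)
Definition newv_pred (p : Vo * Vo * nat) : bool :=
  [&& ori p.1.1 p.1.2, 0 < wo p.1.1 p.1.2, leq 1 p.2 & leq p.2.+1 (n p.1.1 p.1.2)].

Definition newv := {p : Vo * Vo * nat | newv_pred p}.

Definition modV : choiceType := (Vo + newv)%type.

(* Position of an old vertex a on the path of edge e = (x,y), as the
   index i with x^e_i = a (x^e_0 = x, x^e_{n(e)} = y). *)
Definition old_at (a x y : Vo) (i : nat) : bool :=
  ((i == 0%N) && (a == x)) || ((i == n x y) && (a == y)).

(* w(x^e_i, x^e_{i+1}) = n(e) w_o(e), symmetric, 0 otherwise. *)
Definition modw (u v : modV) : RR :=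
  match u, v with
  | inl _, inl _ => 0
  | inl a, inr q =>
      let: (x, y, j) := val q in
      if old_at a x y j.-1 || old_at a x y j.+1 then (n x y)%:R * wo x y else 0
  | inr p, inl a =>
      let: (x, y, i) := val p in
      if old_at a x y i.-1 || old_at a x y i.+1 then (n x y)%:R * wo x y else 0
  | inr p, inr q =>
      let: (x, y, i) := val p in
      let: (x', y', j) := val q in
      if [&& x == x', y == y' & (i == j.+1) || (j == i.+1)]
      then (n x y)%:R * wo x y else 0
  end.

Definition modmu (u : modV) : RR :=
  match u with
  | inl a => muo a
  | inr p => let: (x, y, _) := val p in
             2 * wo x y * sigma x y ^+ 2 / (n x y)%:R
  end.

Definition potU (C1 C2 : RR) (u : modV) : RR :=
  match u with inl _ => C2 | inr _ => - C1 end.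

End Modified.

Arguments modV {Vo} wo ori n.
Arguments modw {Vo} wo ori n u v.
Arguments modmu {Vo} wo muo sigma ori n u.
Arguments potU {Vo wo ori n} C1 C2 u.

From HB Require Import structures.
From mathcomp Require Import all_boot all_order all_algebra.
From mathcomp Require Import all_classical all_reals.
From mathcomp Require Import Rstruct.
From Stdlib Require Import Rdefinitions.
From mathcomp Require Import ring lra zify.
Import Order.TTheory GRing.Theory Num.Theory.
Local Open Scope classical_set_scope.
Local Open Scope ring_scope.
Set Implicit Arguments. Unset Strict Implicit. Unset Printing Implicit Defensive.

(* Take phi = 1 on V_o and, along the path replacing an edge e, the parabolic bump
   phi(x^e_i) = 1 + 4 sigma(e)^2 t (1 - t) with t = i / n(e), so that 1 <= phi <= 2.
   Its second difference along the path is the constant 8 sigma(e)^2 / n(e)^2, and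
   the measure of the new vertices is exactly such that Delta phi = 4 there.  At an
   old vertex only the first step into each path contributes, each edge costing at
   most 4 w_o(e) sigma(e)^2, so Delta phi >= -4 by adaptedness.  Hence C1 = 2,
   C2 = 4 and C3 = 2 work. *)

Section Profile.
Variables (R : realFieldType) (s : R) (m : nat).

Definition profile (i : nat) : R :=
  1 + 4 * s ^+ 2 * (i%:R / m%:R * (1 - i%:R / m%:R)).

Lemma profile0 : profile 0 = 1.
Proof. by rewrite /profile mul0r mul0r mulr0 addr0. Qed.

Hypothesis m_gt0 : (0 < m)%nat.

Let m_neq0 : m%:R != 0 :> R. Proof. by rewrite pnatr_eq0 -lt0n. Qed.

Lemma profile_last : profile m = 1.
Proof. by rewrite /profile divff // subrr !mulr0 addr0. Qed.

Lemma profile_sym i : (i <= m)%nat -> profile (m - i) = profile i.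
Proof. by move=> lim; rewrite /profile natrB //; field. Qed.

Lemma profile1 : profile 1 = 1 + 4 * s ^+ 2 * (m%:R - 1) / m%:R ^+ 2.
Proof. by rewrite /profile; field. Qed.

Lemma profile_second_difference i :
  2 * profile i.+1 - profile i - profile i.+2 = 8 * s ^+ 2 / m%:R ^+ 2.
Proof. by rewrite /profile !mulrSr; field. Qed.

Lemma profile_bounds i : 0 < s <= 1 -> (i <= m)%nat -> 1 <= profile i <= 2.
Proof.
move=> /andP[s_gt0 s_le1] lim; set t : R := i%:R / m%:R.
have t_ge0 : 0 <= t by rewrite divr_ge0 ?ler0n.
have t_le1 : t <= 1 by rewrite ler_pdivrMr ?ltr0n // mul1r ler_nat.
have q_ge0 : 0 <= t * (1 - t) by nra.
have q_le : 4 * (t * (1 - t)) <= 1 by have := sqr_ge0 (2 * t - 1); nra.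
have s2_ge0 : 0 <= s ^+ 2 by rewrite sqr_ge0.
have s2_le1 : s ^+ 2 <= 1 by rewrite expr2; nra.
rewrite /profile -/t; apply/andP; split; nra.
Qed.

Lemma profile1_lower : -4 * s ^+ 2 <= m%:R * (1 - profile 1).
Proof.
have -> : m%:R * (1 - profile 1) = -4 * s ^+ 2 + 4 * s ^+ 2 / m%:R.
  by rewrite profile1; field.
by rewrite lerDl divr_ge0 ?ler0n // mulr_ge0 ?sqr_ge0.
Qed.

End Profile.

Lemma laplacian_two_neighbours (V : choiceType) (w : V -> V -> RR) (mu u : V -> RR)
    (x a b : V) :
  a != b -> [set y | w x y != 0] = [set a; b] ->
  laplacian w mu u x = (mu x)^-1 * (w x a * (u x - u a) + w x b * (u x - u b)).
Proof.
move=> ab Nx; rewrite /laplacian Nx fsbigU0 ?fsbig_set1 //.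
by move=> y [/= -> ba]; move: ab; rewrite ba eqxx.
Qed.

Lemma ler_fsum (T : choiceType) (R : numDomainType) (A : set T) (F G : T -> R) :
  finite_set A -> (forall x, A x -> F x <= G x) ->
  \sum_(x \in A) F x <= \sum_(x \in A) G x.
Proof.
move=> A_fin FG; rewrite !fsbig_finite // big_seq [leRHS]big_seq.
by apply: ler_sum => x; rewrite in_fset_set // inE; apply: FG.
Qed.

Section ModifiedGraph.
Variables (Vo : countType) (wo : Vo -> Vo -> RR) (muo : Vo -> RR)
  (sigma : Vo -> Vo -> RR) (ori : rel Vo) (n : Vo -> Vo -> nat).
Local Notation V := (modV wo ori n).
Local Notation w := (modw wo ori n).
Local Notation vertex_pred := (newv_pred wo ori n).

Definition insub_or (d : Vo) (t : Vo * Vo * nat) : V :=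
  if insub t is Some q then inr q else inl d.

Lemma insub_orP d t :
  (vertex_pred t /\ exists q, insub_or d t = inr q /\ val q = t) \/
  (~~ vertex_pred t /\ insub_or d t = inl d).
Proof. by rewrite /insub_or; case: insubP => [q ? ?|?]; [left; split=> //; exists q|right]. Qed.

Lemma insub_or_eql d t a : (insub_or d t == inl a) = ~~ vertex_pred t && (a == d).
Proof. by case: (insub_orP d t) => [[-> [q [-> _]]] | [-> ->]]. Qed.

Lemma insub_or_eqr d t q : (insub_or d t == inr q) = (val q == t).
Proof.
case: (insub_orP d t) => [[_ [q' [-> <-]]] | [tN ->]] /=; first by rewrite val_eqE eq_sym.
by apply/esym/negbTE; apply: contra tN => /eqP <-; apply: valP.
Qed.

Definition path_prev (x y : Vo) (i : nat) : V := insub_or x (x, y, i.-1).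
Definition path_next (x y : Vo) (i : nat) : V := insub_or y (x, y, i.+1).

(* [1%:R] rather than [1]: a numeral of type [RR] elaborates to a Stdlib real literal. *)
Definition bump (u : V) : RR :=
  match u with
  | inl _ => 1%:R
  | inr p => let: (x, y, i) := val p in profile (sigma x y) (n x y) i
  end.

Section NewVertex.
Variables (x y : Vo) (i : nat) (p : newv wo ori n).
Hypothesis p_val : val p = (x, y, i).

Let p_pred : vertex_pred (x, y, i). Proof. by rewrite -p_val; apply: valP. Qed.

Lemma modw_new v :
  w (inr p) v = if (v == path_prev x y i) || (v == path_next x y i)
                then (n x y)%:R * wo x y else 0.
Proof.
case/and4P: p_pred => /= xy_ori xy_gt0 i_ge1 i_lt.
rewrite /= p_val /path_prev /path_next; case: v => [a | q].
  rewrite ![inl a == _]eq_sym !insub_or_eql /newv_pred /= xy_ori xy_gt0 /old_at.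
  by case: (a == x); case: (a == y); rewrite ?andbT ?andbF //=; congr (if _ then _ else _); lia.
rewrite ![inr q == _]eq_sym !insub_or_eqr; case: q => [[[x' y'] j] _] /=.
rewrite !xpair_eqE [x' == _]eq_sym [y' == _]eq_sym.
by case: (x == x'); case: (y == y') => //=; congr (if _ then _ else _); lia.
Qed.

Lemma bump_path_prev : bump (path_prev x y i) = profile (sigma x y) (n x y) i.-1.
Proof.
case/and4P: p_pred => /= xy_ori xy_gt0 i_ge1 i_lt.
rewrite /path_prev; case: (insub_orP x (x, y, i.-1)) => [[_ [q [-> /= ->]]] // | [t_new ->]].
move: t_new; rewrite /newv_pred /= xy_ori xy_gt0 /= => i1.
have -> : i.-1 = 0%nat by lia.
by rewrite profile0.
Qed.

Lemma bump_path_next : bump (path_next x y i) = profile (sigma x y) (n x y) i.+1.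
Proof.
case/and4P: p_pred => /= xy_ori xy_gt0 i_ge1 i_lt.
rewrite /path_next; case: (insub_orP y (x, y, i.+1)) => [[_ [q [-> /= ->]]] // | [t_new ->]].
move: t_new; rewrite /newv_pred /= xy_ori xy_gt0 /= => i1.
have -> : i.+1 = n x y by lia.
by rewrite profile_last //; lia.
Qed.

Lemma path_prev_neq_next : x != y -> path_prev x y i != path_next x y i.
Proof.
move=> xy; rewrite /path_prev /path_next.
case: (insub_orP y (x, y, i.+1)) => [[_ [q [-> q_val]]] | [_ ->]].
  by rewrite insub_or_eqr q_val xpair_eqE /=; lia.
by rewrite insub_or_eql eq_sym (negPf xy) andbF.
Qed.

Lemma modmu_new :
  modmu wo muo sigma ori n (inr p) = 2 * wo x y * sigma x y ^+ 2 / (n x y)%:R.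
Proof. by rewrite /= p_val !RmultE RdivE IZRposE INRE. Qed.

Lemma laplacian_new : x != y -> sigma x y != 0 ->
  laplacian w (modmu wo muo sigma ori n) bump (inr p) = 4.
Proof.
move=> xy sigma_neq0; case/and4P: p_pred => /= xy_ori xy_gt0 i_ge1 i_lt.
have n_neq0 : (n x y)%:R != 0 :> RR by rewrite pnatr_eq0; lia.
have wo_neq0 : wo x y != 0 by rewrite gt_eqF.
have nw_neq0 : (n x y)%:R * wo x y != 0 by rewrite mulf_neq0.
rewrite (laplacian_two_neighbours _ _ (path_prev_neq_next xy)); last first.
  apply/seteqP; split=> v; rewrite /mkset modw_new.
    by case: ifP => [/orP[/eqP|/eqP] -> _|_]; [left|right|rewrite eqxx].
  by case=> ->; rewrite eqxx ?orbT.
rewrite modmu_new !modw_new !eqxx ?orbT bump_path_prev bump_path_next /= p_val.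
have := profile_second_difference (sigma x y) (ltn_trans i_ge1 i_lt) i.-1.
rewrite prednK // => second_diff.
set P := profile (sigma x y) (n x y) in second_diff *.
have -> : P i.+1 = 2 * P i - P i.-1 - 8 * sigma x y ^+ 2 / (n x y)%:R ^+ 2 by lra.
by field; rewrite n_neq0 wo_neq0 sigma_neq0.
Qed.

End NewVertex.

Section OldVertex.
Hypothesis wo_sym : forall x y, wo x y = wo y x.
Hypothesis ori_orientation : orientation wo ori.
Hypothesis n_edge_weight : edge_weight wo n.
Hypothesis sigma_sym : forall x y, 0 < wo x y -> sigma x y = sigma y x.

Definition edge_first (a z : Vo) : V :=
  if ori a z then insub_or a (a, z, 1%nat) else insub_or a (z, a, (n z a).-1).

Lemma edge_firstP a z : 0 < wo a z ->
  exists q, edge_first a z = inr q /\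
            val q = (if ori a z then (a, z, 1%nat) else (z, a, (n z a).-1)).
Proof.
move=> az_gt0; have za_gt0 : 0 < wo z a by rewrite wo_sym.
have [_ az_ge2] := n_edge_weight az_gt0; have [_ za_ge2] := n_edge_weight za_gt0.
rewrite /edge_first; case: ifP => az_ori.
  case: (insub_orP a (a, z, 1%nat)) => [[_ //] | [+ _]].
  by rewrite /newv_pred /= az_ori az_gt0 /=; lia.
have za_ori : ori z a by rewrite (ori_orientation za_gt0) az_ori.
case: (insub_orP a (z, a, (n z a).-1)) => [[_ //] | [+ _]].
by rewrite /newv_pred /= za_ori za_gt0 /=; lia.
Qed.

Lemma modw_edge_first a z : 0 < wo a z ->
  w (inl a) (edge_first a z) = (n a z)%:R * wo a z.
Proof.
move=> az_gt0; have [q [-> q_val]] := edge_firstP az_gt0.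
rewrite /= q_val /old_at; case: ifP => _ /=; first by rewrite !eqxx.
have za_gt0 : 0 < wo z a by rewrite wo_sym.
have [<- za_ge2] := n_edge_weight za_gt0.
by rewrite wo_sym prednK ?eqxx ?orbT //; lia.
Qed.

Lemma bump_edge_first a z : 0 < wo a z ->
  bump (edge_first a z) = profile (sigma a z) (n a z) 1.
Proof.
move=> az_gt0; have [q [-> q_val]] := edge_firstP az_gt0.
rewrite /= q_val; case: ifP => // _.
have za_gt0 : 0 < wo z a by rewrite wo_sym.
have [<- za_ge2] := n_edge_weight za_gt0.
by rewrite -(sigma_sym az_gt0) -subn1 profile_sym //; lia.
Qed.

Lemma edge_first_inj a : set_inj [set z | 0 < wo a z] (edge_first a).
Proof.
move=> z1 z2; rewrite !inE => /edge_firstP[q1 [-> q1_val]] /edge_firstP[q2 [-> q2_val]].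
move=> [q12]; move: q1_val q2_val; rewrite q12 => ->.
by case: ifP; case: ifP => _ _; congruence.
Qed.

Lemma edge_first_surj a v :
  w (inl a) v != 0 -> exists2 z, 0 < wo a z & edge_first a z = v.
Proof.
case: v => [b | [[[x y] j] q_pred]] /=; first by rewrite eqxx.
case/and4P: (q_pred) => /= xy_ori xy_gt0 j_ge1 j_lt.
case: ifP => [j_at _ | _]; last by rewrite eqxx.
have : (a == x) && (j == 1%nat) || (a == y) && (j.+1 == n x y).
  move: j_at; rewrite /old_at; case: (a == x); case: (a == y); rewrite /= ?andbF ?andbT ?orbF //=; lia.
case/orP=> /andP[/eqP -> /eqP j_end].
- exists y => //; have [q [-> q_val]] := edge_firstP xy_gt0.
  by congr inr; apply: val_inj; rewrite q_val xy_ori /= j_end.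
have yx_gt0 : 0 < wo y x by rewrite wo_sym.
exists x => //; have [q [-> q_val]] := edge_firstP yx_gt0.
congr inr; apply: val_inj; rewrite q_val.
by rewrite (ori_orientation xy_gt0) in xy_ori; rewrite (negPf xy_ori) /= -j_end.
Qed.

Lemma laplacian_old a :
  (forall z, 0 <= wo a z) -> 0 < muo a -> finite_set [set z | wo a z != 0] ->
  (muo a)^-1 * \sum_(z \in [set z | wo a z != 0]) (wo a z * sigma a z ^+ 2) <= 1 ->
  -4 <= laplacian w (modmu wo muo sigma ori n) bump (inl a).
Proof.
move=> wo_ge0 mu_gt0 N_fin sigma_adapted.
have edge z : wo a z != 0 -> 0 < wo a z by move=> az; rewrite lt_def az wo_ge0.
have N_img : [set v | w (inl a) v != 0] = edge_first a @` [set z | wo a z != 0].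
  apply/seteqP; split=> v.
    by move=> /edge_first_surj[z az <-]; exists z => //; rewrite /mkset gt_eqF.
  case=> z /edge az <-; rewrite /mkset modw_edge_first // mulf_neq0 ?gt_eqF //.
  by rewrite ltr0n; have [_] := n_edge_weight az; lia.
rewrite /laplacian N_img fsbig_image; last first.
  move=> z1 z2; rewrite !inE => /edge az1 /edge az2.
  by apply: edge_first_inj; rewrite inE.
have term_ge z : wo a z != 0 -> -4 * (wo a z * sigma a z ^+ 2) <=
    w (inl a) (edge_first a z) * (bump (inl a) - bump (edge_first a z)).
  move=> /edge az; rewrite modw_edge_first // bump_edge_first //=.
  have [_ n_ge2] := n_edge_weight az.
  have := ler_wpM2l (ltW az) (profile1_lower (sigma a z) (ltnW n_ge2)); nra.
have mu_inv_ge0 : 0 <= (muo a)^-1 by rewrite invr_ge0 ltW.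
apply: le_trans (ler_wpM2l mu_inv_ge0 (ler_fsum N_fin term_ge)).
by rewrite -mulr_fsumr mulrCA; lra.
Qed.

End OldVertex.
End ModifiedGraph.

Arguments bump {Vo wo} sigma {ori n} u.

Theorem proposition3p5 :
  exists C1 C2 C3 : RR, [/\ 0 < C1, 0 < C2 & 1 < C3] /\
  forall (Vo : countType) (wo : Vo -> Vo -> RR) (muo : Vo -> RR)
         (sigma : Vo -> Vo -> RR) (ori : rel Vo) (n : Vo -> Vo -> nat),
    simple_wgraph wo muo ->
    adapted wo muo sigma ->
    orientation wo ori ->
    edge_weight wo n ->
    exists phi : modV wo ori n -> RR,
      (forall v, 1 <= phi v <= C3) /\
      (forall v, 0 <= laplacian (modw wo ori n) (modmu wo muo sigma ori n) phi v
                        + potU C1 C2 v * phi v).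
Proof.
exists 2%:R, 4%:R, 2%:R; split; first by split; lra.
move=> Vo wo muo sigma ori n [_ [wo_sym wo_loop] [wo_ge0 mu_gt0] N_fin _].
move=> [sigma_sym sigma_range sigma_adapted] ori_orientation n_edge_weight.
exists (bump sigma); split=> [[a | p] | [a | p]].
- by rewrite /= lexx ler_nat.
- case E: (val p) => [[x y] i]; case/and4P: (valP p); rewrite E /= => _ xy_gt0 i_ge1 i_lt.
  by rewrite /= E profile_bounds ?sigma_range //; lia.
- have := laplacian_old wo_sym ori_orientation n_edge_weight sigma_sym
    (wo_ge0 a) (mu_gt0 a) (N_fin a) (sigma_adapted a).
  rewrite /= mulr1; lra.
- case E: (val p) => [[x y] i]; case/and4P: (valP p); rewrite E /= => _ xy_gt0 i_ge1 i_lt.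
  have xy : x != y by apply: contraTneq xy_gt0 => ->; rewrite wo_loop ltxx.
  have /andP[sigma_gt0 _] := sigma_range x y xy_gt0.
  rewrite (laplacian_new muo E xy (lt0r_neq0 sigma_gt0)) /= E RoppE.
  have /andP[_] := profile_bounds (ltn_trans i_ge1 i_lt) (sigma_range x y xy_gt0) (ltnW i_lt).
  lra.
Qed.
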